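(* The graph isomorphism problem ($\mathsf{GI}$) reduces in polynomial time to the subpopulation Boolean function isomorphism problem ($\mathsf{SubIso}$).
   Context: $\mathsf{GI}$: given two undirected graphs $G$ and $H$ on the vertex set $\{1,\dots,n\}$, decide whether there is a permutation $\pi$ of $\{1,\dots,n\}$ with $\{u,v\}\in E(G)\iff\{\pi(u),\pi(v)\}\in E(H)$. A subpopulation of a node set $V=\{v_1,\dots,v_n\}$ is a subset $S\subseteq V$, encoded as the bit string $x\in\{0,1\}^n$ with $x_i=1$ iff $v_i\in S$; a collection of subpopulations is encoded as the Boolean function $f:\{0,1\}^n\to\{0,1\}$ taking value $1$ exactly on the encodings of the subpopulations in the collection. $\mathsf{SubIso}$: given two Boolean functions $f,g:\{0,1\}^n\to\{0,1\}$ (each given by the collection of subpopulations on which it equals $1$), decide whether there is a permutation $\pi\in S_n$ such that $f(x)=g(\pi(x))$ for all $x\in\{0,1\}^n$, where $\pi(x)$ is the bit string whose $i$-th coordinate is $x_{\pi(i)}$. *)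

From mathcomp Require Import all_boot all_fingroup.
Set Implicit Arguments. Unset Strict Implicit. Unset Printing Implicit Defensive.

Definition word := seq bool.

(* Polynomial-time computable functions on words, via the              *)
(* Bellantoni-Cook function algebra (safe recursion on notation),      *)
(* which characterizes exactly FP [Bellantoni-Cook 1992].              *)
(* A word b0 :: b1 :: ... is read with its first bit as the low-order  *)
(* bit; S_b prepends a bit, P removes the first bit.                   *)
(* Functions take normal arguments xs and safe arguments as_;          *)
(* missing arguments default to the empty word.                        *)
Inductive bc : Type :=
  | BZero
  | BProj (safe : bool) (j : nat)
  | BSucc (b : bool)
  | BPred
  | BCond
  | BRec (g h0 h1 : bc)
  | BComp (h : bc) (rs ts : seq bc).

Fixpoint bc_eval (p : bc) (xs as_ : seq word) {struct p} : word :=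
  match p with
  | BZero => [::]
  | BProj false j => nth [::] xs j
  | BProj true j => nth [::] as_ j
  | BSucc b => b :: nth [::] as_ 0
  | BPred => behead (nth [::] as_ 0)
  | BCond => if head false (nth [::] as_ 0) then nth [::] as_ 2 else nth [::] as_ 1
  | BRec g h0 h1 =>
      let fix rec (y : word) : word :=
        match y with
        | [::] => bc_eval g (behead xs) as_
        | b :: y' => bc_eval (if b then h1 else h0) (y' :: behead xs) (rec y' :: as_)
        end in
      rec (nth [::] xs 0)
  | BComp h rs ts =>
      bc_eval h (map (fun r => bc_eval r xs [::]) rs) (map (fun t => bc_eval t xs as_) ts)
  end.

Definition poly_time_computable (f : word -> word) : Prop :=
  exists p : bc, forall w : word, bc_eval p [:: w] [::] = f w.

Definition poly_reduces (L1 L2 : word -> Prop) : Prop :=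
  exists R : word -> word, poly_time_computable R /\ forall w, L1 w <-> L2 (R w).

Definition enc_unary (n : nat) : word := nseq n true ++ [:: false].

Definition enc_adj n (G : rel 'I_n) : word :=
  flatten [seq [seq G i j | j <- enum 'I_n] | i <- enum 'I_n].

(* simple undirected graph on vertex set 'I_n (= {1..n} shifted) *)
Definition simple_graph n (G : rel 'I_n) : Prop := symmetric G /\ irreflexive G.

Definition graph_iso n (G H : rel 'I_n) : Prop :=
  exists pi : {perm 'I_n}, forall u v, G u v = H (pi u) (pi v).

Definition enc_GI n (G H : rel 'I_n) : word := enc_unary n ++ enc_adj G ++ enc_adj H.

Definition GI_lang (w : word) : Prop :=
  exists n (G H : rel 'I_n),
    [/\ simple_graph G, simple_graph H, w = enc_GI G H & graph_iso G H].

(* subpopulations are bit strings x in {0,1}^n *)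
Definition bits n := {ffun 'I_n -> bool}.
Definition enc_bits n (x : bits n) : word := [seq x i | i <- enum 'I_n].

Definition perm_bits n (pi : {perm 'I_n}) (x : bits n) : bits n := [ffun i => x (pi i)].

(* a collection (list, duplicates/order irrelevant) of subpopulations; each
   element is marked by a leading 'true', the list is terminated by 'false' *)
Definition enc_coll n (s : seq (bits n)) : word :=
  flatten [seq true :: enc_bits x | x <- s] ++ [:: false].

Definition enc_SubIso n (s1 s2 : seq (bits n)) : word :=
  enc_unary n ++ enc_coll s1 ++ enc_coll s2.

(* f = indicator of s1, g = indicator of s2; f(x) = g(pi(x)) for all x *)
Definition subiso n (s1 s2 : seq (bits n)) : Prop :=
  exists pi : {perm 'I_n}, forall x : bits n, (x \in s1) = (perm_bits pi x \in s2).

Definition SubIso_lang (w : word) : Prop :=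
  exists n (s1 s2 : seq (bits n)), w = enc_SubIso s1 s2 /\ subiso s1 s2.

From mathcomp Require Import all_boot all_fingroup zify.
Set Implicit Arguments. Unset Strict Implicit. Unset Printing Implicit Defensive.

(* A pair of graphs (G, H) on n vertices is sent to the two collections of edge vectors
   {e_u + e_v : uv an edge}, i.e. every edge becomes the subpopulation formed by its two
   endpoints.  The coordinate permutation pi^-1 maps the edge vector of uv to that of
   pi(u)pi(v), and for u <> v an edge vector determines its edge, so the coordinate
   permutations matching the two collections are exactly the inverses of the isomorphisms
   from G to H.  Words that do not encode a pair of simple graphs are sent to the empty
   word, which encodes no SubIso instance.  The map is computed in the Bellantoni-Cook
   algebra by nested safe recursions on unary counters. *)

Lemma rev_iotaS m : rev (iota 0 m.+1) = m :: rev (iota 0 m).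
Proof. by rewrite -addn1 iotaD rev_cat. Qed.

Lemma flatten_allpairs S T R (f : S -> T -> seq R) s t :
  flatten [seq f x y | x <- s, y <- t] = flatten [seq flatten [seq f x y | y <- t] | x <- s].
Proof. by elim: s => //= x s IH; rewrite flatten_cat IH. Qed.

Lemma flatten_map_filter T U (P : pred T) (F : T -> seq U) s :
  flatten [seq F x | x <- s & P x] = flatten [seq if P x then F x else [::] | x <- s].
Proof. by elim: s => //= x s IH; case: (P x); rewrite /= IH. Qed.

Lemma head_flatten_flags T (P : pred T) (F : T -> seq bool) s :
  (forall x, F x = if P x then [:: true] else [::]) -> head false (flatten (map F s)) = has P s.
Proof. by move=> eqF; elim: s => //= x s <-; rewrite eqF; case: (P x). Qed.

Lemma size_flatten_uniform T n (ss : seq (seq T)) :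
  all (fun s => size s == n) ss -> size (flatten ss) = size ss * n.
Proof.
elim: ss => [|s ss IH] //= /andP [/eqP size_s /IH size_ss].
by rewrite size_cat size_ss size_s mulSn.
Qed.

Lemma nth_flatten_uniform T (x0 : T) n (ss : seq (seq T)) i j :
  all (fun s => size s == n) ss -> j < n ->
  nth x0 (flatten ss) (i * n + j) = nth x0 (nth [::] ss i) j.
Proof.
move=> + lt_jn; elim: ss i => [|s ss IH] [|i] /=; rewrite ?nth_nil // => /andP [/eqP size_s all_ss].
  by rewrite nth_cat size_s lt_jn.
by rewrite nth_cat size_s ltnNge mulSn -addnA leq_addr /= addKn IH.
Qed.

(** * The reduction *)

Definition dec_unary (w : word) : nat := find negb w.

Definition adj_of (n : nat) (s : word) (k l : nat) : bool := nth false s (k * n + l).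

Definition rel_of (n : nat) (f : nat -> nat -> bool) : rel 'I_n := fun u v => f u v.
Arguments rel_of : clear implicits.

(* Pairs in the order visited by the nested recursions of [bc_square]: safe recursion
   emits its last step first. *)
Definition grid (n : nat) : seq (nat * nat) :=
  [seq (k, l) | k <- rev (iota 0 n), l <- rev (iota 0 n)].

Definition edge_vec (n k l : nat) : bits n := [ffun i : 'I_n => (i == k :> nat) || (i == l :> nat)].

Definition edge_coll (n : nat) (f : nat -> nat -> bool) : seq (bits n) :=
  [seq edge_vec n p.1 p.2 | p <- grid n & f p.1 p.2].

Definition adj_defect (f : nat -> nat -> bool) (p : nat * nat) : bool :=
  (f p.1 p.2 != f p.2 p.1) || (p.1 == p.2) && f p.1 p.2.

Definition reduce (w : word) : word :=
  let n := dec_unary w in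
  let G := adj_of n (drop n.+1 w) in
  let H := adj_of n (drop (n.+1 + n * n) w) in
  if [&& size w == n.+1 + n * n + n * n, ~~ has (adj_defect G) (grid n)
       & ~~ has (adj_defect H) (grid n)]
  then enc_SubIso (edge_coll n G) (edge_coll n H) else [::].

Lemma mem_grid n p : (p \in grid n) = (p.1 < n) && (p.2 < n).
Proof.
case: p => k l; apply/allpairsP/andP => [[[k' l'] /= [lt_k lt_l [-> ->]]]|[lt_k lt_l]].
  by rewrite mem_rev mem_iota in lt_k; rewrite mem_rev mem_iota in lt_l.
by exists (k, l); rewrite !mem_rev !mem_iota.
Qed.

Lemma simple_gridP n f : reflect (simple_graph (rel_of n f)) (~~ has (adj_defect f) (grid n)).
Proof.
apply: (iffP hasPn) => [no_defect|[sym_f irr_f] [k l]].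
  have {}no_defect (u v : 'I_n) : ~~ adj_defect f (val u, val v).
    by apply: no_defect; rewrite mem_grid !ltn_ord.
  split=> [u v|u].
    by move: (no_defect u v); rewrite /adj_defect negb_or => /andP [/negPn /eqP].
  by move: (no_defect u u); rewrite /adj_defect !eqxx => /negbTE.
rewrite mem_grid /adj_defect => /andP [/= lt_k lt_l].
have := sym_f (Ordinal lt_k) (Ordinal lt_l); rewrite /rel_of /= => ->; rewrite eqxx /=.
by case: eqP => //= <-; exact: negbT (irr_f (Ordinal lt_k)).
Qed.

(** * Edge collections *)

Section EdgeCollections.
Variable n : nat.
Implicit Types (f g : nat -> nat -> bool) (u v k l : 'I_n).

Lemma perm_bitsK (s : {perm 'I_n}) : cancel (perm_bits s) (perm_bits (s^-1)%g).
Proof. by move=> x; apply/ffunP => i; rewrite !ffunE permKV. Qed.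

Lemma perm_bits_edge_vec (s : {perm 'I_n}) u v :
  perm_bits s (edge_vec n u v) = edge_vec n ((s^-1)%g u) ((s^-1)%g v).
Proof.
apply/ffunP => i; rewrite !ffunE.
have eq_inv k : (val (s i) == val k) = (val i == val ((s^-1)%g k)) by exact: (canF_eq (permK s)).
by rewrite !eq_inv.
Qed.

Lemma edge_vec_eq u v k l : u != v -> edge_vec n u v = edge_vec n k l ->
  (k, l) = (u, v) \/ (k, l) = (v, u).
Proof.
move=> neq_uv eq_e; have at_i i := congr1 (fun x : bits n => x i) eq_e.
move: (at_i u) (at_i v) (at_i k) (at_i l) neq_uv; rewrite !ffunE !eqxx /= !orbT.
by do 2![case/esym/orP => /eqP/val_inj ->]; rewrite ?eqxx //; [left | right].
Qed.

Lemma edge_collP f x :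
  reflect (exists u v, f u v /\ x = edge_vec n u v) (x \in edge_coll n f).
Proof.
apply: (iffP mapP) => [[[k l]]|[u [v [fuv ->]]]].
  rewrite mem_filter mem_grid => /andP [/= fkl /andP [lt_k lt_l]] ->.
  by exists (Ordinal lt_k), (Ordinal lt_l).
by exists (val u, val v); rewrite // mem_filter mem_grid /= fuv !ltn_ord.
Qed.

Lemma mem_edge_coll f u v :
  symmetric (rel_of n f) -> u != v -> (edge_vec n u v \in edge_coll n f) = f u v.
Proof.
move=> sym_f neq_uv; apply/edge_collP/idP => [[k [l [fkl eq_e]]]|fuv]; last by exists u, v.
by case: (edge_vec_eq neq_uv eq_e) fkl => -[-> ->] //; rewrite [f v u](sym_f v u).
Qed.

Lemma perm_edge_coll f g (pi : {perm 'I_n}) x :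
  (forall u v, f u v = g (pi u) (pi v)) ->
  x \in edge_coll n f -> perm_bits (pi^-1)%g x \in edge_coll n g.
Proof.
move=> iso_pi /edge_collP [u [v [fuv ->]]]; rewrite perm_bits_edge_vec invgK.
by apply/edge_collP; exists (pi u), (pi v); rewrite -iso_pi.
Qed.

Lemma subiso_edge_coll f g :
  simple_graph (rel_of n f) -> simple_graph (rel_of n g) ->
  subiso (edge_coll n f) (edge_coll n g) <-> graph_iso (rel_of n f) (rel_of n g).
Proof.
move=> [sym_f irr_f] [sym_g irr_g]; split=> [[s iso_s]|[pi iso_pi]].
  exists (s^-1)%g => u v; have [<-|neq_uv] := eqVneq u v; first by rewrite irr_f irr_g.
  rewrite /rel_of -mem_edge_coll // iso_s perm_bits_edge_vec mem_edge_coll //.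
  by rewrite (inj_eq perm_inj).
exists (pi^-1)%g => x; apply/idP/idP; first exact: perm_edge_coll.
have iso_inv (a b : 'I_n) : g a b = f ((pi^-1)%g a) ((pi^-1)%g b) by rewrite [RHS]iso_pi !permKV.
by move/(perm_edge_coll iso_inv); rewrite perm_bitsK.
Qed.

End EdgeCollections.

Lemma size_enc_bits n (x : bits n) : size (enc_bits x) = n.
Proof. by rewrite size_map size_enum_ord. Qed.

Lemma enc_bits_inj n : injective (@enc_bits n).
Proof. by move=> x y /eq_in_map eq_xy; apply/ffunP => i; rewrite eq_xy ?mem_enum. Qed.

Lemma enc_edge_vec n k l : enc_bits (edge_vec n k l) = [seq (j == k) || (j == l) | j <- iota 0 n].
Proof. by rewrite /enc_bits -val_enum_ord; elim: (enum _) => //= i s ->; rewrite ffunE. Qed.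

Lemma enc_coll_catI n (s t : seq (bits n)) r1 r2 :
  enc_coll s ++ r1 = enc_coll t ++ r2 -> s = t /\ r1 = r2.
Proof.
have enc_cons (x : bits n) s' : enc_coll (x :: s') ++ r1 = true :: enc_bits x ++ enc_coll s' ++ r1.
  by rewrite /enc_coll /= -!catA.
elim: s t => [|x s IH] [|y t] //; rewrite ?enc_cons /enc_coll /=; try by case.
move=> [] /eqP; rewrite -!catA eqseq_cat ?size_enc_bits // => /andP [/eqP /enc_bits_inj -> /eqP].
by rewrite !catA -/(enc_coll s) -/(enc_coll t) => /IH [-> ->].
Qed.

Lemma dec_unary_cat n s : dec_unary (enc_unary n ++ s) = n.
Proof. by elim: n => //= n ->. Qed.

Lemma take_dec_unary w : dec_unary w < size w -> take (dec_unary w).+1 w = enc_unary (dec_unary w).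
Proof. by elim: w => [|[] w IH] //= => [/IH ->|]; rewrite ?take0. Qed.

Lemma SubIso_lang_enc n (s1 s2 : seq (bits n)) : SubIso_lang (enc_SubIso s1 s2) <-> subiso s1 s2.
Proof.
split=> [[m [t1 [t2 [eq_enc sub]]]]|sub]; last by exists n, s1, s2.
have := congr1 dec_unary eq_enc; rewrite /enc_SubIso !dec_unary_cat => eq_nm.
subst m; move/(congr1 (drop (size (enc_unary n)))): eq_enc.
rewrite !drop_size_cat // => /enc_coll_catI [-> eq_s2].
by case: (@enc_coll_catI n s2 t2 [::] [::]) => [|-> //]; rewrite !cats0.
Qed.

Lemma SubIso_lang_nil : ~ SubIso_lang [::].
Proof. by move=> [n [s1 [s2 [/(congr1 size)]]]]; rewrite !size_cat size_nseq addn1. Qed.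

Section AdjacencyEncoding.
Variable n : nat.
Implicit Type G H : rel 'I_n.

Lemma size_rows_enc_adj G :
  all (fun s => size s == n) [seq [seq G i j | j <- enum 'I_n] | i <- enum 'I_n].
Proof. by apply/allP => s /mapP [i _ ->]; rewrite size_map size_enum_ord. Qed.

Lemma size_enc_adj G : size (enc_adj G) = n * n.
Proof. by rewrite (size_flatten_uniform (size_rows_enc_adj G)) size_map size_enum_ord. Qed.

Lemma adj_of_enc_adj G s (u v : 'I_n) : adj_of n (enc_adj G ++ s) u v = G u v.
Proof.
have lt_uv : u * n + v < n * n by have := ltn_ord u; have := ltn_ord v; nia.
rewrite /adj_of nth_cat size_enc_adj lt_uv (nth_flatten_uniform _ _ (size_rows_enc_adj G)) //.
rewrite (nth_map u) ?size_enum_ord // nth_ord_enum.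
by rewrite (nth_map v) ?size_enum_ord // nth_ord_enum.
Qed.

Lemma enc_adj_of s : n * n <= size s -> enc_adj (rel_of n (adj_of n s)) = take (n * n) s.
Proof.
move=> size_s; apply: (@eq_from_nth _ false) => [|p]; rewrite size_enc_adj ?size_takel // => lt_p.
have n_gt0 : 0 < n by case: n lt_p => //; rewrite muln0.
have lt_q : p %/ n < n by rewrite ltn_divLR.
have lt_r : p %% n < n by rewrite ltn_pmod.
rewrite nth_take // {1 2}(divn_eq p n).
have := adj_of_enc_adj (rel_of n (adj_of n s)) [::] (Ordinal lt_q) (Ordinal lt_r).
by rewrite cats0.
Qed.

Lemma size_enc_GI G H : size (enc_GI G H) = n.+1 + n * n + n * n.
Proof. by rewrite !size_cat size_nseq !size_enc_adj addn1 addnA. Qed.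

Lemma adj_of_enc_GI G H :
  rel_of n (adj_of n (drop n.+1 (enc_GI G H))) =2 G /\
  rel_of n (adj_of n (drop (n.+1 + n * n) (enc_GI G H))) =2 H.
Proof.
have size_unary : size (enc_unary n) = n.+1 by rewrite size_cat size_nseq addn1.
split=> u v; rewrite /rel_of /enc_GI; first by rewrite drop_size_cat // adj_of_enc_adj.
rewrite catA drop_size_cat; last by rewrite size_cat size_unary size_enc_adj.
by rewrite -[enc_adj H]cats0 adj_of_enc_adj.
Qed.

End AdjacencyEncoding.

Lemma enc_GI_adj_of w (n := dec_unary w) : size w = n.+1 + n * n + n * n ->
  enc_GI (rel_of n (adj_of n (drop n.+1 w))) (rel_of n (adj_of n (drop (n.+1 + n * n) w))) = w.
Proof.
move=> size_w; rewrite /enc_GI !enc_adj_of ?size_drop ?size_w; try lia.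
rewrite -take_dec_unary -/n ?size_w; last by lia.
rewrite (@take_oversize _ (n * n) (drop (n.+1 + n * n) w)) ?size_drop ?size_w; last by lia.
by rewrite addnC -drop_drop !cat_take_drop.
Qed.

(** * Correctness of the reduction *)

Lemma simple_graph_eq2 n (G G' : rel 'I_n) : G =2 G' -> simple_graph G' -> simple_graph G.
Proof.
by move=> eq_G [sym_G irr_G]; split=> [u v|u]; rewrite !eq_G; [exact: sym_G | exact: irr_G].
Qed.

Lemma graph_iso_eq2 n (G G' H H' : rel 'I_n) :
  G =2 G' -> H =2 H' -> graph_iso G' H' -> graph_iso G H.
Proof. by move=> eq_G eq_H [pi iso_pi]; exists pi => u v; rewrite eq_G eq_H iso_pi. Qed.

Lemma reduce_correct w : GI_lang w <-> SubIso_lang (reduce w).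
Proof.
split=> [[n [G [H [simple_G simple_H -> iso_GH]]]]|].
  have [eq_G eq_H] := adj_of_enc_GI G H.
  have simple_G' := simple_graph_eq2 eq_G simple_G.
  have simple_H' := simple_graph_eq2 eq_H simple_H.
  rewrite /reduce dec_unary_cat size_enc_GI eqxx.
  rewrite (introT (simple_gridP _ _) simple_G') (introT (simple_gridP _ _) simple_H').
  apply/SubIso_lang_enc/(subiso_edge_coll simple_G' simple_H').
  exact: graph_iso_eq2 eq_G eq_H iso_GH.
rewrite /reduce; set n := dec_unary w.
case: ifP => [/and3P [/eqP size_w /simple_gridP simple_G /simple_gridP simple_H]|_].
  move/SubIso_lang_enc/(subiso_edge_coll simple_G simple_H) => iso_GH.
  exists n, (rel_of n (adj_of n (drop n.+1 w))), (rel_of n (adj_of n (drop (n.+1 + n * n) w))).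
  by rewrite enc_GI_adj_of.
by move/SubIso_lang_nil.
Qed.

(** * Bellantoni-Cook programs *)

Definition bc_test (p : bc) (xs as_ : seq word) : bool := head false (bc_eval p xs as_).

(* Numbers are handled in unary: only the size of a word matters. *)
Notation size_of p xs := (size (bc_eval p xs [::])).

Definition bc_arg (j : nat) : bc := BProj false j.
Definition bc_acc : bc := BProj true 0.
Definition bc_push (b : bool) (p : bc) : bc := BComp (BSucc b) [::] [:: p].
Definition bc_if (c p q : bc) : bc := BComp BCond [::] [:: c; q; p].
Definition bc_true : bc := bc_push true BZero.
Definition bc_false : bc := bc_push false BZero.
Definition bc_bit (c : bc) : bc := bc_if c bc_true bc_false.
Definition bc_not (c : bc) : bc := bc_if c BZero bc_true.
Definition bc_and (c d : bc) : bc := bc_if c d BZero.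
Definition bc_or (c d : bc) : bc := bc_if c bc_true d.
Definition bc_xor (c d : bc) : bc := bc_if c (bc_not d) d.

Lemma bc_eval_push b p xs as_ : bc_eval (bc_push b p) xs as_ = b :: bc_eval p xs as_.
Proof. by []. Qed.

Lemma bc_eval_if c p q xs as_ : bc_eval (bc_if c p q) xs as_ =
  if bc_test c xs as_ then bc_eval p xs as_ else bc_eval q xs as_.
Proof. by []. Qed.

Lemma bc_eval_bit c xs as_ : bc_eval (bc_bit c) xs as_ = [:: bc_test c xs as_].
Proof. by rewrite bc_eval_if; case: bc_test. Qed.

Lemma bc_test_not c xs as_ : bc_test (bc_not c) xs as_ = ~~ bc_test c xs as_.
Proof. by rewrite {1}/bc_test bc_eval_if; case: (bc_test c xs as_). Qed.

Lemma bc_test_and c d xs as_ : bc_test (bc_and c d) xs as_ = bc_test c xs as_ && bc_test d xs as_.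
Proof. by rewrite {1}/bc_test bc_eval_if; case: (bc_test c xs as_). Qed.

Lemma bc_test_or c d xs as_ : bc_test (bc_or c d) xs as_ = bc_test c xs as_ || bc_test d xs as_.
Proof. by rewrite {1}/bc_test bc_eval_if; case: (bc_test c xs as_). Qed.

Lemma bc_test_xor c d xs as_ :
  bc_test (bc_xor c d) xs as_ = (bc_test c xs as_ != bc_test d xs as_).
Proof.
rewrite {1}/bc_test bc_eval_if.
by case: (bc_test c xs as_); [exact: bc_test_not | rewrite /bc_test; case: head].
Qed.

Lemma bc_eval_rec_cons g h0 h1 b y xs as_ :
  bc_eval (BRec g h0 h1) ((b :: y) :: xs) as_ =
  bc_eval (if b then h1 else h0) (y :: xs) (bc_eval (BRec g h0 h1) (y :: xs) as_ :: as_).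
Proof. by []. Qed.

Definition bc_app : bc := BRec bc_acc (BSucc false) (BSucc true).
Definition bc_cat (p q : bc) : bc := BComp bc_app [:: p] [:: q].
Definition bc_drop : bc := BRec bc_acc BPred BPred.
Definition bc_dropn (p q : bc) : bc := BComp bc_drop [:: p] [:: q].
Definition bc_ones : bc := BRec BZero (BSucc true) (BSucc true).
Definition bc_lt (p q : bc) : bc := bc_dropn p (BComp bc_ones [:: q] [::]).
Definition bc_eqn (p q : bc) : bc := bc_and (bc_not (bc_lt p q)) (bc_not (bc_lt q p)).
Definition bc_mul : bc := BRec BZero (bc_cat (bc_arg 1) bc_acc) (bc_cat (bc_arg 1) bc_acc).
Definition bc_times (p q : bc) : bc := BComp bc_mul [:: p; q] [::].
Definition bc_unary_prefix : bc := BRec BZero BZero (BSucc true).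
Definition bc_dim (j : nat) : bc := BComp bc_unary_prefix [:: bc_arg j] [::].

Lemma bc_app_eval x y xs as_ : bc_eval bc_app (x :: xs) (y :: as_) = x ++ y.
Proof. by elim: x => [|[] x IH] //; rewrite {1}/bc_app bc_eval_rec_cons -/bc_app IH. Qed.

Lemma bc_eval_cat p q xs as_ : bc_eval (bc_cat p q) xs as_ = bc_eval p xs [::] ++ bc_eval q xs as_.
Proof. exact: bc_app_eval. Qed.

Lemma bc_drop_eval x y xs as_ : bc_eval bc_drop (x :: xs) (y :: as_) = drop (size x) y.
Proof.
elim: x => [|b x IH]; first by rewrite drop0.
by rewrite {1}/bc_drop bc_eval_rec_cons -/bc_drop if_same IH /= -drop1 drop_drop add1n.
Qed.

Lemma bc_eval_dropn p q xs as_ :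
  bc_eval (bc_dropn p q) xs as_ = drop (size_of p xs) (bc_eval q xs as_).
Proof. exact: bc_drop_eval. Qed.

Lemma bc_test_dropn p q xs as_ :
  bc_test (bc_dropn p q) xs as_ = nth false (bc_eval q xs as_) (size_of p xs).
Proof. by rewrite /bc_test bc_eval_dropn -nth0 nth_drop addn0. Qed.

Lemma bc_ones_eval x xs as_ : bc_eval bc_ones (x :: xs) as_ = nseq (size x) true.
Proof. by elim: x => [|b x IH] //; rewrite {1}/bc_ones bc_eval_rec_cons -/bc_ones if_same IH. Qed.

Lemma bc_test_lt p q xs as_ : bc_test (bc_lt p q) xs as_ = (size_of p xs < size_of q xs).
Proof. by rewrite bc_test_dropn [bc_eval (BComp _ _ _) _ _]bc_ones_eval nth_nseq; case: ltnP. Qed.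

Lemma bc_test_eqn p q xs as_ : bc_test (bc_eqn p q) xs as_ = (size_of p xs == size_of q xs).
Proof. by rewrite bc_test_and !bc_test_not !bc_test_lt; case: ltngtP. Qed.

Lemma size_bc_mul x y xs as_ : size (bc_eval bc_mul (x :: y :: xs) as_) = size x * size y.
Proof.
elim: x => [|b x IH] //.
by rewrite {1}/bc_mul bc_eval_rec_cons -/bc_mul if_same bc_eval_cat size_cat IH mulSn.
Qed.

Lemma size_bc_times p q xs as_ :
  size (bc_eval (bc_times p q) xs as_) = size_of p xs * size_of q xs.
Proof. exact: size_bc_mul. Qed.

Lemma bc_unary_prefix_eval x xs as_ :
  bc_eval bc_unary_prefix (x :: xs) as_ = nseq (dec_unary x) true.
Proof.
by elim: x => [|[] x IH] //; rewrite {1}/bc_unary_prefix bc_eval_rec_cons -/bc_unary_prefix ?IH.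
Qed.

Lemma bc_dim_eval j xs as_ : bc_eval (bc_dim j) xs as_ = nseq (dec_unary (nth [::] xs j)) true.
Proof. exact: bc_unary_prefix_eval. Qed.

Definition bc_concat (body : bc) : bc := BRec BZero (bc_cat body bc_acc) (bc_cat body bc_acc).

Lemma bc_concat_eval body m xs as_ :
  bc_eval (bc_concat body) (nseq m true :: xs) as_ =
  flatten [seq bc_eval body (nseq i true :: xs) [::] | i <- rev (iota 0 m)].
Proof.
elim: m => [|m IH] //.
by rewrite [nseq _ _]/= {1}/bc_concat bc_eval_rec_cons -/bc_concat bc_eval_cat IH rev_iotaS.
Qed.

Definition bc_square (body : bc) : bc :=
  BComp (bc_concat (BComp (bc_concat body) [:: bc_dim 2; bc_arg 0; bc_arg 2] [::]))
    [:: bc_dim 0; BZero; bc_arg 0] [::].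

Lemma bc_square_eval body w as_ :
  bc_eval (bc_square body) [:: w] as_ =
  flatten [seq bc_eval body [:: nseq p.2 true; nseq p.1 true; w] [::] | p <- grid (dec_unary w)].
Proof.
rewrite -[LHS]/(bc_eval (bc_concat _) [:: bc_eval (bc_dim 0) [:: w] [::]; [::]; w] [::]).
rewrite bc_dim_eval bc_concat_eval /grid map_allpairs flatten_allpairs.
congr flatten; apply: eq_map => k.
rewrite -[LHS]/(bc_eval (bc_concat _)
  [:: bc_eval (bc_dim 2) [:: nseq k true; [::]; w] [::]; _; w] [::]).
by rewrite bc_dim_eval bc_concat_eval.
Qed.

Definition bc_offset1 (j : nat) : bc := bc_push true (bc_dim j).
Definition bc_offset2 (j : nat) : bc := bc_cat (bc_offset1 j) (bc_times (bc_dim j) (bc_dim j)).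
Definition bc_entry (off p q : bc) : bc :=
  bc_dropn (bc_cat off (bc_cat (bc_times p (bc_dim 2)) q)) (bc_arg 2).

Lemma size_bc_offset1 j xs : size_of (bc_offset1 j) xs = (dec_unary (nth [::] xs j)).+1.
Proof. by rewrite bc_eval_push bc_dim_eval /= size_nseq. Qed.

Lemma size_bc_offset2 j xs (n := dec_unary (nth [::] xs j)) :
  size_of (bc_offset2 j) xs = n.+1 + n * n.
Proof. by rewrite bc_eval_cat size_cat size_bc_offset1 size_bc_times bc_dim_eval size_nseq. Qed.

Lemma bc_test_entry off p q xs as_ (w := nth [::] xs 2) :
  bc_test (bc_entry off p q) xs as_ =
  adj_of (dec_unary w) (drop (size_of off xs) w) (size_of p xs) (size_of q xs).
Proof.
rewrite /adj_of nth_drop bc_test_dropn !bc_eval_cat !size_cat.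
by rewrite size_bc_times bc_dim_eval size_nseq.
Qed.

(* Entry j of the edge vector is emitted at counter value i = n - 1 - j, hence the test
   i + k + 1 == n. *)
Definition bc_hits (p : bc) : bc := bc_eqn (bc_push true (bc_cat (bc_arg 0) p)) (bc_dim 3).
Definition bc_edge_vec : bc :=
  BComp (bc_concat (bc_bit (bc_or (bc_hits (bc_arg 2)) (bc_hits (bc_arg 1)))))
    [:: bc_dim 2; bc_arg 0; bc_arg 1; bc_arg 2] [::].

Lemma bc_test_hits p xs as_ : bc_test (bc_hits p) xs as_ =
  ((size (nth [::] xs 0) + size_of p xs).+1 == dec_unary (nth [::] xs 3)).
Proof. by rewrite bc_test_eqn bc_eval_push bc_eval_cat bc_dim_eval /= size_cat size_nseq. Qed.

Lemma bc_edge_vec_eval k l w (n := dec_unary w) : k < n -> l < n ->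
  bc_eval bc_edge_vec [:: nseq l true; nseq k true; w] [::] = enc_bits (edge_vec n k l).
Proof.
move=> lt_k lt_l; rewrite enc_edge_vec.
rewrite -[LHS]/(bc_eval (bc_concat _)
  [:: bc_eval (bc_dim 2) [:: nseq l true; nseq k true; w] [::]; nseq l true; nseq k true; w] [::]).
rewrite bc_dim_eval bc_concat_eval [nth _ _ 2]/= -/n.
under eq_map => i do rewrite bc_eval_bit bc_test_or !bc_test_hits /= !size_nseq.
rewrite flatten_map1; apply: (@eq_from_nth _ false) => [|j].
  by rewrite !size_map size_rev.
rewrite size_map size_rev size_iota => lt_j.
rewrite !(nth_map 0) ?size_rev ?size_iota // nth_rev ?size_iota // !nth_iota //.
  by congr orb; apply/eqP/eqP; lia.
by lia.
Qed.

Definition bc_edge_item (off : bc) : bc :=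
  bc_if (bc_entry off (bc_arg 1) (bc_arg 0)) (bc_push true bc_edge_vec) BZero.
Definition bc_coll (off : bc) : bc := bc_cat (bc_square (bc_edge_item off)) bc_false.

Lemma bc_coll_eval off o w as_ (n := dec_unary w) :
  (forall k l, size_of off [:: nseq l true; nseq k true; w] = o) ->
  bc_eval (bc_coll off) [:: w] as_ = enc_coll (edge_coll n (adj_of n (drop o w))).
Proof.
move=> size_off; rewrite bc_eval_cat bc_square_eval /enc_coll /edge_coll.
rewrite -map_comp flatten_map_filter.
congr (flatten _ ++ _); apply/eq_in_map => -[k l]; rewrite mem_grid => /andP [lt_k lt_l].
rewrite bc_eval_if bc_eval_push bc_edge_vec_eval // bc_test_entry /= !size_nseq size_off.
by case: ifP.
Qed.

Definition bc_is_simple (off : bc) : bc :=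
  let entry := bc_entry off (bc_arg 1) (bc_arg 0) in
  let defect := bc_or (bc_xor entry (bc_entry off (bc_arg 0) (bc_arg 1)))
                      (bc_and (bc_eqn (bc_arg 1) (bc_arg 0)) entry) in
  bc_not (bc_square (bc_if defect bc_true BZero)).

Lemma bc_test_is_simple off o w as_ (n := dec_unary w) :
  (forall k l, size_of off [:: nseq l true; nseq k true; w] = o) ->
  bc_test (bc_is_simple off) [:: w] as_ = ~~ has (adj_defect (adj_of n (drop o w))) (grid n).
Proof.
move=> size_off; rewrite bc_test_not /bc_test bc_square_eval; congr negb.
apply: head_flatten_flags => -[k l].
rewrite bc_eval_if bc_test_or bc_test_xor bc_test_and bc_test_eqn !bc_test_entry /= !size_nseq.
by rewrite size_off; case: ifP.
Qed.

Definition bc_valid : bc :=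
  bc_and (bc_eqn (bc_arg 0) (bc_cat (bc_offset2 0) (bc_times (bc_dim 0) (bc_dim 0))))
    (bc_and (bc_is_simple (bc_offset1 2)) (bc_is_simple (bc_offset2 2))).
Definition bc_output : bc :=
  bc_cat (bc_dim 0) (bc_push false (bc_cat (bc_coll (bc_offset1 2)) (bc_coll (bc_offset2 2)))).
Definition bc_reduction : bc := bc_if bc_valid bc_output BZero.

Lemma bc_reduction_eval w : bc_eval bc_reduction [:: w] [::] = reduce w.
Proof.
set n := dec_unary w.
have size_offset1 k l : size_of (bc_offset1 2) [:: nseq l true; nseq k true; w] = n.+1.
  exact: size_bc_offset1.
have size_offset2 k l : size_of (bc_offset2 2) [:: nseq l true; nseq k true; w] = n.+1 + n * n.
  exact: size_bc_offset2.
rewrite bc_eval_if bc_test_and bc_test_eqn bc_test_and bc_eval_cat size_cat size_bc_offset2.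
rewrite size_bc_times bc_dim_eval size_nseq.
rewrite (bc_test_is_simple _ size_offset1) (bc_test_is_simple _ size_offset2) /reduce -/n.
case: ifP => // _; rewrite bc_eval_cat bc_dim_eval bc_eval_push bc_eval_cat.
by rewrite (bc_coll_eval _ size_offset1) (bc_coll_eval _ size_offset2) /enc_SubIso /enc_unary -catA.
Qed.

Theorem mainTheorem1 : poly_reduces GI_lang SubIso_lang.
Proof.
exists reduce; split; last exact: reduce_correct.
by exists bc_reduction; exact: bc_reduction_eval.
Qed.
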